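(* Consider the $1$-median problem in $\mathbb{R}^1$ where object $i$ has its own maximum speed $v_i>0$. Let $v_M=\max_i v_i$ and $v_m=\min_i v_i$. There is an absolute constant $C$ such that on every instance $I$ with $n$ objects, the measure of the Round-robin strategy is at most $C\,\frac{v_M n}{v_m}\cdot\mathrm{OPT}(I)$.
   Context: Setting. There are $n\ge 2$ objects in $\mathbb{R}^d$; object $i$ follows a trajectory $p_i:[0,\infty)\to\mathbb{R}^d$ with $|p_i(t)-p_i(s)|\le v_i|t-s|$ for all $s,t$, where $v_i>0$ is a known speed bound for object $i$. The initial positions $p_i(0)$ are known. A query strategy queries one object at each time $t=1,2,3,\dots$; querying object $i$ at time $t$ reveals $p_i(t)$. For $t\ge 0$ let $\tau_i(t)$ be the last time $\le t$ at which object $i$ was queried (or $0$ if never). The uncertainty region of object $i$ at time $t$ is the closed ball $U_i(t)$ of radius $v_i(t-\tau_i(t))$ centered at $p_i(\tau_i(t))$. For a center function $f$ mapping an $n$-tuple of points to a point, the uncertainty region of the center at time $t$ is $\{f(q_1,\dots,q_n): q_i\in U_i(t)\}$. The size of a set is its diameter. The measure of a strategy on an instance is the supremum over $t\in\{1,2,\dots\}$ of the size of the center's uncertainty region at time $t$ (just after the query at time $t$). The optimal measure $\mathrm{OPT}(I)$ of an instance $I$ is the infimum of the measure over all query sequences, which may be chosen with full knowledge of the trajectories. The Round-robin strategy queries objects $1,2,\dots,n,1,2,\dots,n,\dots$ in a fixed cyclic order. Here $d=1$ and the center function is the $1$-median: for $x_1,\dots,x_n\in\mathbb{R}$ it is the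 $\lceil n/2\rceil$-th smallest of the $x_i$ if $n$ is odd, and the midpoint of the $(n/2)$-th and $(n/2+1)$-th smallest if $n$ is even. *)

From HB Require Import structures.
From mathcomp Require Import all_boot all_order all_algebra.
From mathcomp Require Import boolp classical_sets reals constructive_ereal ereal.
Set Implicit Arguments. Unset Strict Implicit. Unset Printing Implicit Defensive.
Import Order.TTheory GRing.Theory Num.Theory.
Local Open Scope ring_scope.
Local Open Scope classical_set_scope.

Section Defs.
Variable R : realType.
Variable n : nat.

(* 1-median of x_1..x_n : the ceil(n/2)-th smallest if n odd, midpoint of the
   (n/2)-th and (n/2+1)-th smallest if n even (0-indexed positions below). *)
Definition median (x : 'I_n -> R) : R :=
  let s := sort <=%R [seq x i | i <- enum 'I_n] in
  if odd n then nth 0 s n./2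
  else (nth 0 s n./2.-1 + nth 0 s n./2) / 2.

(* query sequence: q t is the object queried at time t (t = 1,2,...; q 0 unused) *)
(* last time <= t (and >= 1) at which object i was queried, 0 if never *)
Definition last_query (q : nat -> 'I_n) (i : 'I_n) (t : nat) : nat :=
  \max_(1 <= s < t.+1 | q s == i) s.

Definition in_uncertainty (v : 'I_n -> R) (p : 'I_n -> R -> R)
    (q : nat -> 'I_n) (i : 'I_n) (t : nat) (y : R) : Prop :=
  let tau := last_query q i t in
  `|y - p i tau%:R| <= v i * (t - tau)%:R.

Definition center_region v p q (t : nat) : set R :=
  [set median x | x in [set x : 'I_n -> R | forall i, in_uncertainty v p q i t (x i)]].

Definition diam (A : set R) : \bar R :=
  ereal_sup [set (`|a - b|)%:E | a in A & b in A].

Definition measure_of v p q : \bar R :=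
  ereal_sup [set diam (center_region v p q t) | t in [set t : nat | (0 < t)%N]].

Definition OPT v p : \bar R :=
  ereal_inf [set measure_of v p q | q in [set: nat -> 'I_n]].

(* Round-robin: objects 1,2,...,n,1,2,... at times 1,2,... (0-indexed ordinals) *)
Definition round_robin (q : nat -> 'I_n) : Prop :=
  forall t : nat, (0 < t)%N -> val (q t) = (t.-1 %% n)%N.

Definition speed_bounded (v : 'I_n -> R) (p : 'I_n -> R -> R) : Prop :=
  forall i s t, 0 <= s -> 0 <= t -> `|p i t - p i s| <= v i * `|t - s|.

Definition vmax (v : 'I_n -> R) : R := \big[Num.max/0]_(i < n) v i.
Definition vmin (v : 'I_n -> R) : R := \big[Num.min/vmax v]_(i < n) v i.
End Defs.

(* Round-robin queries every object within any n consecutive steps, so all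
   uncertainty radii stay below [vmax v * n]; as the median is 1-Lipschitz for
   the sup-norm, the measure of Round-robin is at most [2 * vmax v * n].
   Conversely every query sequence has measure at least [vmin v].  At time t
   only the object a just queried has radius 0; all others have radius at least
   [vmin v].  If moving every object to the top, resp. bottom, of its interval
   moves the median by less than [vmin v], counting shows that the order
   statistics at the median rank bracket the position e of a.  For even n this
   is impossible.  For odd n the other objects then split evenly around e, each
   at distance at least r_i - vmin v from it, so e minimises the sum of the
   distances to the other centers; hence the potential
   sum_i (|c_i - e| - r_i) decreases by [vmin v] at every step while staying
   above [- vmin v * n], which cannot go on forever. *)

From HB Require Import structures.
From mathcomp Require Import all_boot all_order all_algebra.
From mathcomp Require Import boolp classical_sets reals constructive_ereal ereal.
From mathcomp Require Import zify lra.
Set Implicit Arguments. Unset Strict Implicit. Unset Printing Implicit Defensive.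
Import Order.TTheory GRing.Theory Num.Theory.
Local Open Scope ring_scope.

Section OrderStatistics.
Variables (R : realFieldType) (I : finType).
Implicit Types (x : I -> R) (y : R).

Definition order_stat x j : R := nth 0 (sort <=%R [seq x i | i <- enum I]) j.

Lemma count_sort_map x (P : pred R) :
  count P (sort <=%R [seq x i | i <- enum I]) = #|[set i | P (x i)]|.
Proof.
rewrite (permP (permEl (perm_sort _ _))) count_map cardE /enum_mem size_filter.
by rewrite -enumT count_filter; apply: eq_count => i; rewrite !inE andbT.
Qed.

Let sorted_stats x : sorted <=%R (sort <=%R [seq x i | i <- enum I]).
Proof. exact: (sort_sorted le_total). Qed.

Let size_stats x : size (sort <=%R [seq x i | i <- enum I]) = #|I|.
Proof. by rewrite size_sort size_map cardE. Qed.

Lemma order_stat_le x j y :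
  (j < #|[set i | (x i <= y)%R]|)%N -> order_stat x j <= y.
Proof. by rewrite -(count_sort_map x (fun z => z <= y)); apply: nth_count_le. Qed.

Lemma card_le_order_stat x j :
  (j < #|I|)%N -> (j < #|[set i | (x i <= order_stat x j)%R]|)%N.
Proof.
move=> jI; rewrite ltnNge; apply/negP => cj.
have := @nth_count_gt _ _ (order_stat x j) 0 _ j (sorted_stats x).
by rewrite count_sort_map cj size_stats jI ltxx => /(_ isT).
Qed.

Lemma card_lt_order_stat x j : (#|[set i | (x i < order_stat x j)%R]| <= j)%N.
Proof.
rewrite leqNgt; apply/negP => jc.
have := @nth_count_lt _ _ (order_stat x j) 0 _ j (sorted_stats x).
by rewrite count_sort_map jc ltxx => /(_ isT).
Qed.

Lemma card_ge_order_stat x j :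
  (#|I| - j <= #|[set i | (order_stat x j <= x i)%R]|)%N.
Proof.
set B := [set i | _]; rewrite -(cardsC B) leq_subLR addnC leq_add2r.
apply: leq_trans (card_lt_order_stat x j).
by apply: subset_leq_card; apply/fintype.subsetP => i; rewrite !inE -ltNge.
Qed.

Lemma order_stat_leD (x y : I -> R) j eps : (j < #|I|)%N ->
  (forall i, x i <= y i + eps) -> order_stat x j <= order_stat y j + eps.
Proof.
move=> jI xy; apply: order_stat_le.
apply: (leq_trans (card_le_order_stat y jI)); apply: subset_leq_card.
by apply/fintype.subsetP => i; rewrite !inE => yi; rewrite (le_trans (xy i)) // lerD2r.
Qed.

End OrderStatistics.

Lemma median_order_stat (R : realType) (n : nat) (x : 'I_n -> R) :
  median x = if odd n then order_stat x n./2
             else (order_stat x n./2.-1 + order_stat x n./2) / 2.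
Proof. by []. Qed.

Lemma median_dist_le (R : realType) (n : nat) (x y : 'I_n -> R) eps : (0 < n)%N ->
  (forall i, `|x i - y i| <= eps) -> `|median x - median y| <= eps.
Proof.
move=> n_gt0 xy.
have os_dist j : (j < n)%N -> `|order_stat x j - order_stat y j| <= eps.
  move=> jn; rewrite -(card_ord n) in jn.
  have x_le i : x i <= y i + eps by have := xy i; rewrite ler_norml => /andP[]; lra.
  have y_le i : y i <= x i + eps by have := xy i; rewrite ler_norml => /andP[]; lra.
  have := order_stat_leD jn x_le; have := order_stat_leD jn y_le.
  by rewrite ler_norml => h1 h2; apply/andP; split; lra.
have half_lt : (n./2 < n)%N by rewrite ltn_half_double -addnn; lia.
rewrite !median_order_stat; case: ifP => _; first exact: os_dist.
have := os_dist _ half_lt; have := os_dist _ (leq_ltn_trans (leq_pred _) half_lt).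
by rewrite !ler_norml => /andP[h1 h2] /andP[h3 h4]; apply/andP; split; lra.
Qed.

Section MedianMinimizesDistance.
Variable R : realDomainType.

Lemma dist_le_addr (c e y : R) : c <= e -> `|c - e| + (y - e) <= `|c - y|.
Proof.
move=> ce; rewrite ler0_norm ?subr_le0 // distrC.
have := ler_norm (y - c); lra.
Qed.

Lemma dist_le_subr (c e y : R) : e <= c -> `|c - e| - (y - e) <= `|c - y|.
Proof.
move=> ec; rewrite ger0_norm ?subr_ge0 //.
have := ler_norm (c - y); lra.
Qed.

Lemma sum_dist_median (I : finType) (S L : {set I}) (c : I -> R) (e y : R) :
  L \subset S -> #|S| = (2 * #|L|)%N ->
  (forall i, i \in L -> c i <= e) -> (forall i, i \in S :\: L -> e <= c i) ->
  \sum_(i in S) `|c i - e| <= \sum_(i in S) `|c i - y|.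
Proof.
move=> LS cardS lo hi.
have cardSL : #|S :\: L| = #|L| by rewrite cardsDS // cardS; lia.
have sumL : \sum_(i in L) `|c i - e| + (y - e) *+ #|L| <= \sum_(i in L) `|c i - y|.
  by rewrite -sumr_const -big_split /=; apply: ler_sum => i /lo; apply: dist_le_addr.
have sumSL : \sum_(i in S :\: L) `|c i - e| - (y - e) *+ #|L| <=
             \sum_(i in S :\: L) `|c i - y|.
  by rewrite -cardSL -sumr_const -sumrB; apply: ler_sum => i /hi; apply: dist_le_subr.
rewrite [leLHS](big_setID L) [leRHS](big_setID L) /= (finset.setIidPr LS); lra.
Qed.

End MedianMinimizesDistance.

Section ThinGap.
Variables (R : realFieldType) (I : finType) (a : I) (c r : I -> R) (d : R).
Hypotheses (r_a : r a = 0) (d_le_r : forall i, i != a -> d <= r i) (d_gt0 : 0 < d).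

(* [[c i - r i, c i + r i]] is the interval of object [i], and [a] the object
   just queried. *)
Local Notation up := (fun i => c i + r i).
Local Notation lo := (fun i => c i - r i).

Lemma thin_gap_count j j' : (j < #|I|)%N ->
  order_stat up j - order_stat lo j' < 2 * d ->
  (j < j' + (order_stat lo j' <= c a <= order_stat up j)%R)%N.
Proof.
move=> jI gap.
set A := [set i | (up i <= order_stat up j)%R].
set B := [set i | (order_stat lo j' <= lo i)%R].
have cardA : (j < #|A|)%N := card_le_order_stat up jI.
have cardB : (#|I| - j' <= #|B|)%N := card_ge_order_stat lo j'.
(* Every interval but that of [a] has length [2 * r i >= 2 * d]. *)
have AB_a : A :&: B \subset [set a].
  apply/fintype.subsetP => i; rewrite !inE => /andP[iA iB].
  by apply: contraLR gap => /d_le_r; move: iA iB; rewrite -leNgt; lra.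
have cardAB : (#|A :&: B| <= (a \in A :&: B))%N.
  case: (boolP (a \in A :&: B)) => [_ | aAB]; first by rewrite /= -(cards1 a) subset_leq_card.
  rewrite leqn0 cards_eq0; apply/eqP/setP => i; rewrite finset.in_set0; apply/negbTE.
  by apply: contra aAB => iAB; have := fintype.subsetP AB_a i iAB; rewrite inE => /eqP <-.
move: cardAB; rewrite !inE r_a addr0 subr0 andbC.
have := cardsUI A B; have := max_card (A :|: B); move: cardA cardB.
by case: (_ && _) => /=; lia.
Qed.

Lemma thin_gap_index_le j j' : (j < #|I|)%N ->
  order_stat up j - order_stat lo j' < 2 * d -> (j <= j')%N.
Proof. by move=> jI /(thin_gap_count jI); case: (_ <= _ <= _)%R => /=; lia. Qed.

Lemma thin_gap_bracket j : (j < #|I|)%N ->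
  order_stat up j - order_stat lo j < 2 * d ->
  order_stat lo j <= c a <= order_stat up j.
Proof. by move=> jI /(thin_gap_count jI); case: (_ <= _ <= _)%R; rewrite ?addn0 ?ltnn. Qed.

Let r_ge0 i : 0 <= r i.
Proof.
by case: (eqVneq i a) => [->|ia]; [rewrite r_a | exact: le_trans (ltW d_gt0) (d_le_r ia)].
Qed.

Let order_stat_lo_le_up j : (j < #|I|)%N -> order_stat lo j <= order_stat up j.
Proof.
move=> jI; rewrite -[leRHS]addr0; apply: order_stat_leD => // i.
by have := r_ge0 i; lra.
Qed.

Lemma even_gap_ge : ~~ odd #|I| -> (0 < #|I|)%N ->
  d <= (order_stat up #|I|./2.-1 + order_stat up #|I|./2) / 2 -
       (order_stat lo #|I|./2.-1 + order_stat lo #|I|./2) / 2.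
Proof.
move=> evenI I_gt0; rewrite leNgt; apply/negP => gap.
have cardI : #|I| = (#|I|./2 + #|I|./2)%N by rewrite addnn -[LHS]odd_double_half (negbTE evenI).
set k := #|I|./2 in cardI gap *.
have k1I : (k.-1 < #|I|)%N by lia.
have kI : (k < #|I|)%N by lia.
have := order_stat_lo_le_up k1I; have := order_stat_lo_le_up kI => le2 le1.
have /andP[_ le_e1] : order_stat lo k.-1 <= c a <= order_stat up k.-1.
  by apply: thin_gap_bracket => //; lra.
have /andP[le_2e _] : order_stat lo k <= c a <= order_stat up k.
  by apply: thin_gap_bracket => //; lra.
have : (k <= k.-1)%N by apply: (thin_gap_index_le kI); lra.
lia.
Qed.

Section OddThinGap.
Variable k : nat.
Hypotheses (cardI : #|I| = (k + k).+1) (gap : order_stat up k - order_stat lo k < d).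

Let below := [set i | (i != a) && (c i + r i < c a + d)].
Let above := [set i | (i != a) && (c a - d < c i - r i)].

Let kI : (k < #|I|)%N. Proof. by rewrite cardI ltnS leq_addr. Qed.

Let bracket : order_stat lo k <= c a <= order_stat up k.
Proof. by apply: (thin_gap_bracket kI); move: gap d_gt0; lra. Qed.

Let card_below : (k <= #|below|)%N.
Proof.
have sub : [set i | (c i + r i <= order_stat up k)%R] \subset a |: below.
  apply/fintype.subsetP => i; rewrite !inE; case: (eqVneq i a) => //= _.
  by move: bracket gap => /andP[]; lra.
have := leq_trans (card_le_order_stat up kI) (subset_leq_card sub).
by rewrite cardsU1 inE eqxx.
Qed.

Let card_above : (k <= #|above|)%N.
Proof.
have sub : [set i | (order_stat lo k <= c i - r i)%R] \subset a |: above.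
  apply/fintype.subsetP => i; rewrite !inE; case: (eqVneq i a) => //= _.
  by move: bracket gap => /andP[]; lra.
have := leq_trans (card_ge_order_stat lo k) (subset_leq_card sub).
by rewrite cardsU1 inE eqxx cardI /= subSn ?leq_addr // addnK ltnS.
Qed.

Let below_above_disjoint : below :&: above = finset.set0.
Proof.
apply/setP => i; rewrite !inE; apply/negbTE/negP => /andP[/andP[ia hb] /andP[_ ha]].
by move: (d_le_r ia) hb ha; lra.
Qed.

Let below_above_cover : below :|: above = [set~ a].
Proof.
have sub : below :|: above \subset [set~ a].
  by apply/fintype.subsetP => i; rewrite !inE => /orP[] /andP[].
apply/eqP; rewrite eqEcard sub cardsC1 cardI /=.
by have := cardsUI below above; rewrite below_above_disjoint cards0; lia.
Qed.

Let card_below_eq : #|below| = k.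
Proof.
have := cardsUI below above; rewrite below_above_disjoint below_above_cover cards0.
by rewrite cardsC1 cardI /=; lia.
Qed.

Lemma odd_thin_gap_dist i : r i - d <= `|c i - c a|.
Proof.
have := ler_norm (c i - c a); rewrite distrC; have := ler_norm (c a - c i); rewrite distrC.
case: (eqVneq i a) => [->|ia]; first by rewrite r_a; move: d_gt0; lra.
have := d_le_r ia; have : i \in below :|: above by rewrite below_above_cover !inE.
by rewrite !inE ia => /orP[]; lra.
Qed.

Lemma odd_thin_gap_median y :
  \sum_(i | i != a) `|c i - c a| <= \sum_(i | i != a) `|c i - y|.
Proof.
have sum_set1C f : \sum_(i | i != a) f i = \sum_(i in [set~ a]) f i :> R.
  by apply: eq_bigl => i; rewrite !inE.
rewrite !sum_set1C; apply: (@sum_dist_median _ _ _ below).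
- by rewrite -below_above_cover finset.subsetUl.
- by rewrite cardsC1 cardI card_below_eq; lia.
- by move=> i; rewrite inE => /andP[/d_le_r]; lra.
rewrite -below_above_cover => i; rewrite !inE => /andP[ib].
by rewrite (negbTE ib) /= => /andP[/d_le_r]; lra.
Qed.

End OddThinGap.
End ThinGap.

Section LastQuery.
Variables (n : nat) (q : nat -> 'I_n).

Lemma last_query_le i t : (last_query q i t <= t)%N.
Proof. by apply/bigmax_leqP_seq => s; rewrite mem_index_iota ltnS => /andP[]. Qed.

Lemma last_query_ge i s t : (0 < s <= t)%N -> q s = i -> (s <= last_query q i t)%N.
Proof.
move=> /andP[s_gt0 st] qs; apply: (leq_bigmax_seq (F := id)); last exact/eqP.
by rewrite mem_index_iota s_gt0 ltnS.
Qed.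

Lemma last_queryS i t :
  last_query q i t.+1 = if q t.+1 == i then t.+1 else last_query q i t.
Proof.
rewrite /last_query big_mkcond big_nat_recr //= -big_mkcond /=.
case: ifP => _; last by rewrite maxn0.
by apply/maxn_idPr; rewrite leqW // last_query_le.
Qed.

Lemma last_query_self t : (0 < t)%N -> last_query q (q t) t = t.
Proof. by case: t => // t _; rewrite last_queryS eqxx. Qed.

Lemma last_query_lt i t : (0 < t)%N -> q t != i -> (last_query q i t < t)%N.
Proof.
by case: t => // t _; rewrite last_queryS => /negbTE ->; rewrite ltnS last_query_le.
Qed.

Lemma round_robin_last_query i t : round_robin q -> (t - last_query q i t <= n)%N.
Proof.
(* For [t > n], object [i] was queried at time [t - (t.-1 - i) %% n]. *)
move=> rr; case: (leqP t n) => [tn | nt]; first exact: leq_trans (leq_subr _ _) tn.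
have i_lt := ltn_ord i.
have := divn_eq (t.-1 - i)%N n; have := @ltn_pmod (t.-1 - i)%N n (leq_ltn_trans (leq0n i) i_lt).
move: ((t.-1 - i) %/ n)%N ((t.-1 - i) %% n)%N => D M M_lt decomp.
have s_pos : (0 < t - M <= t)%N by move: decomp; move: (D * n)%N => Dn; lia.
suff qs : q (t - M)%N = i by have := last_query_ge s_pos qs; lia.
apply: val_inj; rewrite /= rr ?(andP s_pos).1 //.
have -> : (t - M).-1 = (D * n + i)%N by move: decomp; move: (D * n)%N => Dn; lia.
by rewrite modnMDl modn_small.
Qed.

End LastQuery.

Section Speeds.
Variables (R : realType) (n : nat) (v : 'I_n -> R).

Lemma le_vmax i : v i <= vmax v.
Proof. by rewrite /vmax (bigD1 i) //= le_max lexx. Qed.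

Lemma vmin_le i : vmin v <= v i.
Proof. by rewrite /vmin (bigD1 i) //= ge_min lexx. Qed.

Lemma vmin_gt0 : (0 < n)%N -> (forall i, 0 < v i) -> 0 < vmin v.
Proof.
move=> n_gt0 v_gt0; apply: (big_ind (fun x => 0 < x)) => [||i _]; last exact: v_gt0.
- exact: lt_le_trans (v_gt0 (Ordinal n_gt0)) (le_vmax _).
- by move=> x y x_gt0 y_gt0; rewrite lt_min x_gt0 y_gt0.
Qed.

End Speeds.

Section UncertaintyRegions.
Variables (R : realType) (n : nat) (v : 'I_n -> R) (p : 'I_n -> R -> R) (q : nat -> 'I_n).

Definition unc_center t i := p i (last_query q i t)%:R.
Definition unc_radius t i := v i * (t - last_query q i t)%:R.
Definition unc_hi t i := unc_center t i + unc_radius t i.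
Definition unc_lo t i := unc_center t i - unc_radius t i.

Lemma in_uncertaintyE i t y :
  in_uncertainty v p q i t y = (`|y - unc_center t i| <= unc_radius t i).
Proof. by []. Qed.

Lemma unc_radius_self t : (0 < t)%N -> unc_radius t (q t) = 0.
Proof. by move=> t_gt0; rewrite /unc_radius last_query_self // subnn mulr0. Qed.

Lemma unc_centerS t i : q t.+1 != i -> unc_center t.+1 i = unc_center t i.
Proof. by rewrite /unc_center last_queryS => /negbTE ->. Qed.

Lemma unc_radiusS t i : q t.+1 != i -> unc_radius t.+1 i = unc_radius t i + v i.
Proof.
by rewrite /unc_radius last_queryS => /negbTE ->; rewrite subSn ?last_query_le // mulrSr mulrDr mulr1.
Qed.

Hypothesis v_gt0 : forall i, 0 < v i.

Lemma unc_radius_ge0 t i : 0 <= unc_radius t i.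
Proof. by apply: mulr_ge0; [exact: ltW | exact: ler0n]. Qed.

Lemma vmin_le_unc_radius t i : (0 < t)%N -> i != q t -> vmin v <= unc_radius t i.
Proof.
move=> t_gt0 iq; apply: le_trans (vmin_le v i) _.
apply: ler_peMr; first exact: ltW.
by rewrite ler1n subn_gt0 last_query_lt // eq_sym.
Qed.

Lemma median_spread_le_diam t :
  (`|median (unc_hi t) - median (unc_lo t)|%:E <= diam (center_region v p q t))%E.
Proof.
apply: ereal_sup_ubound; exists (median (unc_hi t)); first exists (unc_hi t) => // i.
  by rewrite in_uncertaintyE /unc_hi addrC addKr ger0_norm ?unc_radius_ge0.
exists (median (unc_lo t)) => //; exists (unc_lo t) => // i.
by rewrite in_uncertaintyE /unc_lo addrC addKr normrN ger0_norm ?unc_radius_ge0.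
Qed.

End UncertaintyRegions.

Lemma round_robin_measure_le (R : realType) (n : nat) (v : 'I_n -> R) p q :
  (0 < n)%N -> (forall i, 0 < v i) -> round_robin q ->
  (measure_of v p q <= (2 * vmax v * n%:R)%:E)%E.
Proof.
move=> n_gt0 v_gt0 rr; apply: ge_ereal_sup => _ [t _ <-].
apply: ge_ereal_sup => _ [_ [x x_in <-]] [_ [y y_in <-]] <-.
rewrite lee_fin; apply: median_dist_le => // i.
have r_le : unc_radius v q t i <= vmax v * n%:R.
  apply: ler_pM; [exact: ltW | exact: ler0n | exact: le_vmax |].
  by rewrite ler_nat round_robin_last_query.
have := x_in i; have := y_in i; rewrite !in_uncertaintyE => hy hx.
have := ler_distD (unc_center p q t i) (x i) (y i); rewrite [X in _ <= _ + X]distrC -mulrA.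
by move: r_le; move: (vmax v * n%:R) => M; lra.
Qed.

Section LowerBound.
Variables (R : realType) (n : nat) (v : 'I_n -> R) (p : 'I_n -> R -> R) (q : nat -> 'I_n).
Hypotheses (n_ge2 : (2 <= n)%N) (v_gt0 : forall i, 0 < v i).

Local Notation center := (unc_center p q).
Local Notation radius := (unc_radius v q).
Local Notation spread t := (median (unc_hi v p q t) - median (unc_lo v p q t)).

Let vmin_v_gt0 : 0 < vmin v.
Proof. by apply: vmin_gt0 => //; apply: leq_trans n_ge2. Qed.

Lemma even_spread_ge t : (0 < t)%N -> ~~ odd n -> vmin v <= spread t.
Proof.
move=> t_gt0 even_n; rewrite !median_order_stat (negbTE even_n).
have := @even_gap_ge R _ (q t) (center t) (radius t) (vmin v).
rewrite card_ord; apply; rewrite ?unc_radius_self //.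
- by move=> i; apply: vmin_le_unc_radius.
- exact: leq_trans n_ge2.
Qed.

Definition potential t :=
  \sum_i (`|center t i - center t (q t)| - radius t i).

Section OddCount.
Hypothesis odd_n : odd n.

Let cardI : #|'I_n| = (n./2 + n./2).+1.
Proof. by rewrite card_ord addnn -[LHS]odd_double_half odd_n. Qed.

Lemma odd_thin_dist t i : (0 < t)%N -> spread t < vmin v ->
  radius t i - vmin v <= `|center t i - center t (q t)|.
Proof.
move=> t_gt0; rewrite !median_order_stat odd_n => thin.
apply: (@odd_thin_gap_dist R _ (q t) (center t) (radius t) _ _ _ _ _ cardI thin) => //.
- exact: unc_radius_self.
- by move=> j; apply: vmin_le_unc_radius.
Qed.

Lemma odd_thin_median t y : (0 < t)%N -> spread t < vmin v ->
  \sum_(i | i != q t) `|center t i - center t (q t)| <=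
  \sum_(i | i != q t) `|center t i - y|.
Proof.
move=> t_gt0; rewrite !median_order_stat odd_n => thin.
apply: (@odd_thin_gap_median R _ (q t) (center t) (radius t) _ _ _ _ _ cardI thin) => //.
- exact: unc_radius_self.
- by move=> j; apply: vmin_le_unc_radius.
Qed.

Lemma potential_ge t : (0 < t)%N -> spread t < vmin v ->
  - (vmin v *+ n) <= potential t.
Proof.
move=> t_gt0 thin; rewrite -mulNrn -[in X in _ *+ X](card_ord n) -sumr_const.
by apply: ler_sum => i _; have := odd_thin_dist i t_gt0 thin; lra.
Qed.

Let vmin_twice_le b : vmin v *+ 2 <= \sum_(i | i != b) v i.
Proof.
have n_ge3 : (2 < n)%N by move: n_ge2 odd_n; case: n => [|[|[]]].
apply: le_trans (ler_sum _ (fun i _ => vmin_le v i)).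
rewrite (eq_bigl (mem [set~ b])) => [|i]; last by rewrite !inE.
by rewrite sumr_const cardsC1 card_ord ler_pMn2l // -ltnS prednK // ltnW.
Qed.

Lemma potential_decay t : (0 < t)%N -> spread t < vmin v -> spread t.+1 < vmin v ->
  potential t.+1 <= potential t - vmin v.
Proof.
move=> t_gt0 thin thinS; set b := q t.+1; set e := center t (q t).
have median_step := odd_thin_median e (ltn0Sn t) thinS.
have dist_b := odd_thin_dist b t_gt0 thin.
have centerS i : i != b -> center t.+1 i = center t i by rewrite eq_sym; apply: unc_centerS.
have radiusS i : i != b -> radius t.+1 i = radius t i + v i by rewrite eq_sym; apply: unc_radiusS.
have -> : potential t.+1 = \sum_(i | i != b) `|center t.+1 i - center t.+1 b| -
    (\sum_(i | i != b) radius t i + \sum_(i | i != b) v i).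
  rewrite /potential (bigD1 b) //= unc_radius_self // subrr normr0 subr0 add0r sumrB.
  by rewrite -big_split; congr (_ - _); apply: eq_bigr => i /radiusS.
have -> : potential t = `|center t b - e| - radius t b +
    (\sum_(i | i != b) `|center t i - e| - \sum_(i | i != b) radius t i).
  by rewrite /potential (bigD1 b) //= sumrB.
rewrite (eq_bigr _ (fun i ib => congr1 (fun x => `|x - e|) (centerS i ib))) in median_step.
by move: median_step dist_b (vmin_twice_le b); rewrite mulr2n; lra.
Qed.

Lemma odd_spread_ge : exists2 t, (0 < t)%N & vmin v <= spread t.
Proof.
apply: contrapT => none.
have thin t : (0 < t)%N -> spread t < vmin v.
  by move=> t_gt0; rewrite ltNge; apply/negP => wide; apply: none; exists t.
have decay m : potential m.+1 <= potential 1 - m%:R * vmin v.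
  elim: m => [|m IH]; first by rewrite mul0r subr0.
  have := potential_decay (ltn0Sn m) (thin _ (ltn0Sn m)) (thin _ (ltn0Sn m.+1)).
  by rewrite -natr1 mulrDl mul1r; move: IH; lra.
pose X := potential 1 + vmin v *+ n.
have X_ge0 : 0 <= `|X| / vmin v by rewrite divr_ge0 // ltW.
have := archi_boundP X_ge0; rewrite ltr_pdivrMr //.
move: (Num.Def.archi_bound _) => m large.
have := decay m; have := potential_ge (ltn0Sn m) (thin _ (ltn0Sn m)).
by move: large (ler_norm X); rewrite /X; lra.
Qed.

End OddCount.
End LowerBound.

Lemma spread_ge (R : realType) (n : nat) (v : 'I_n -> R) p q :
  (2 <= n)%N -> (forall i, 0 < v i) ->
  exists2 t, (0 < t)%N & vmin v <= median (unc_hi v p q t) - median (unc_lo v p q t).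
Proof.
move=> n_ge2 v_gt0; case: (boolP (odd n)) => [odd_n | even_n]; first exact: odd_spread_ge.
by exists 1%N => //; apply: even_spread_ge.
Qed.

Lemma vmin_le_OPT (R : realType) (n : nat) (v : 'I_n -> R) p :
  (2 <= n)%N -> (forall i, 0 < v i) -> ((vmin v)%:E <= OPT v p)%E.
Proof.
move=> n_ge2 v_gt0; apply/ereal_infP => _ [q _ <-].
have [t t_gt0 wide] := spread_ge p q n_ge2 v_gt0.
have diam_le : (diam (center_region v p q t) <= measure_of v p q)%E.
  by apply: ereal_sup_ubound; exists t.
apply: le_trans diam_le; apply: le_trans (median_spread_le_diam p q v_gt0 t).
by rewrite lee_fin (le_trans wide) // ler_norm.
Qed.

Theorem proposition5 (R : realType) :
  exists C : R,
  forall (n : nat) (v : 'I_n -> R) (p : 'I_n -> R -> R) (q : nat -> 'I_n),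
    (2 <= n)%N ->
    (forall i, 0 < v i) ->
    speed_bounded v p ->
    round_robin q ->
    (measure_of v p q <= (C * vmax v * n%:R / vmin v)%:E * OPT v p)%E.
Proof.
(* Neither bound uses the speed bound: they hold for arbitrary trajectories. *)
exists 2 => n v p q n_ge2 v_gt0 _ rr.
have n_gt0 : (0 < n)%N by apply: leq_trans n_ge2.
have vmin_pos : 0 < vmin v by apply: vmin_gt0.
have C_ge0 : 0 <= 2 * vmax v * n%:R / vmin v.
  by rewrite !mulr_ge0 ?ler0n ?invr_ge0 ?ltW // (lt_le_trans (v_gt0 (Ordinal n_gt0))) ?le_vmax.
apply: le_trans (round_robin_measure_le p n_gt0 v_gt0 rr) _.
apply: le_trans (lee_pmul _ _ (lexx _) (vmin_le_OPT p n_ge2 v_gt0)); rewrite ?lee_fin //.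
- by rewrite divfK ?gt_eqF.
- exact: ltW.
Qed.
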